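(* Let $d$ and $K\ge 2$ be integers with $d\ge K$, and let $\hat{\mathbf{W}}_{\rm ETF}=[\hat{\mathbf{w}}_1,\dots,\hat{\mathbf{w}}_K]\in\mathbb{R}^{d\times K}$ be a simplex equiangular tight frame, i.e. $\hat{\mathbf{W}}_{\rm ETF}=\sqrt{\frac{K}{K-1}}\,\mathbf{U}\left(\mathbf{I}_K-\frac{1}{K}\mathbf{1}_K\mathbf{1}_K^T\right)$ for some $\mathbf{U}\in\mathbb{R}^{d\times K}$ with $\mathbf{U}^T\mathbf{U}=\mathbf{I}_K$ (so that $\hat{\mathbf{w}}_{k}^T\hat{\mathbf{w}}_{k'}=\frac{K}{K-1}\delta_{k,k'}-\frac{1}{K-1}$ for all $k,k'\in[1,K]$). Consider $T+1$ sessions $t=0,1,\dots,T$. The label space $\{1,\dots,K\}$ is partitioned into pairwise disjoint nonempty sets $\mathcal{C}^{(0)},\dots,\mathcal{C}^{(T)}$, where session $t$ contains the $K^{(t)}=|\mathcal{C}^{(t)}|$ classes of $\mathcal{C}^{(t)}$, so $K=\sum_{t=0}^T K^{(t)}$. Each class $k$ has $n_k\ge 1$ samples (the $n_k$ may be arbitrary and the $K^{(t)}$ may differ across sessions), and session $t$ has $N^{(t)}=\sum_{k\in\mathcal{C}^{(t)}} n_k$ samples. For each session $t$ consider the problem $$\min_{\mathbf{M}^{(t)}}\ \frac{1}{N^{(t)}}\sum_{k\in\mathcal{C}^{(t)}}\sum_{i=1}^{n_k}\mathcal{L}\left(\mathbf{m}^{(t)}_{k,i},\hat{\mathbf{W}}_{\rm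 ETF}\right)\quad\text{s.t.}\quad \|\mathbf{m}^{(t)}_{k,i}\|^2\le 1\ \ \forall k\in\mathcal{C}^{(t)},\ 1\le i\le n_k,$$ where $\mathbf{m}^{(t)}_{k,i}\in\mathbb{R}^d$ is a free feature variable for the $i$-th sample of class $k$ in session $t$, $\mathbf{M}^{(t)}\in\mathbb{R}^{d\times N^{(t)}}$ is the collection of these variables, and $\hat{\mathbf{W}}_{\rm ETF}$ is held fixed. The loss $\mathcal{L}$ for a feature $\mathbf{m}$ of class $k$ is either the cross-entropy loss $\mathcal{L}(\mathbf{m},\hat{\mathbf{W}}_{\rm ETF})=-\log\frac{\exp(\hat{\mathbf{w}}_k^T\mathbf{m})}{\sum_{j=1}^K\exp(\hat{\mathbf{w}}_j^T\mathbf{m})}$ or the dot-regression loss $\mathcal{L}(\mathbf{m},\hat{\mathbf{W}}_{\rm ETF})=\frac{1}{2}\left(\hat{\mathbf{w}}_k^T\mathbf{m}-1\right)^2$. Let $\hat{\mathbf{M}}^{(t)}$ denote the global minimizer of this problem for session $t$, obtained by optimizing incrementally for $t=0,1,\dots,T$, and let $\hat{\mathbf{M}}=[\hat{\mathbf{M}}^{(0)},\dots,\hat{\mathbf{M}}^{(T)}]\in\mathbb{R}^{d\times\sum_{t=0}^T N^{(t)}}$. Then, for either choice of loss, every column $\hat{\mathbf{m}}_{k,i}$ of $\hat{\mathbf{M}}$ with class label $k$ satisfies $$\|\hat{\mathbf{m}}_{k,i}\|=1,\qquad \hat{\mathbf{m}}_{k,i}^T\hat{\mathbf{w}}_{k'}=\frac{K}{K-1}\delta_{k,k'}-\frac{1}{K-1}\quad\forall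 k,k'\in[1,K],\ 1\le i\le n_k,$$ where $\delta_{k,k'}=1$ if $k=k'$ and $0$ otherwise.
   Context: This is a simplified (''unconstrained features'') model of few-shot class-incremental learning: the backbone network is dropped and the last-layer features are treated as independent optimization variables, while the classifier is a fixed simplex ETF covering the whole label space of all sessions. $\mathbf{I}_K$ is the $K\times K$ identity matrix and $\mathbf{1}_K$ the all-ones vector in $\mathbb{R}^K$. *)

From HB Require Import structures.
From mathcomp Require Import all_boot all_order all_algebra.
From mathcomp Require Import all_classical all_reals all_analysis.
Set Implicit Arguments. Unset Strict Implicit. Unset Printing Implicit Defensive.
Import Order.TTheory GRing.Theory Num.Theory.
Local Open Scope ring_scope.

Definition dotv (R : realType) (d : nat) (u v : 'cV[R]_d) : R :=
  \sum_(i < d) u i ord0 * v i ord0.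
Definition vnorm (R : realType) (d : nat) (u : 'cV[R]_d) : R :=
  Num.sqrt (dotv u u).

Definition simplex_ETF (R : realType) (d K : nat) (U : 'M[R]_(d, K)) : 'M[R]_(d, K) :=
  Num.sqrt (K%:R / (K%:R - 1)) *:
    (U *m (1%:M - K%:R^-1 *: const_mx 1)).

Inductive loss_kind := CrossEntropy | DotRegression.

Definition loss (R : realType) (d K : nat) (lk : loss_kind) (W : 'M[R]_(d, K))
    (k : 'I_K) (m : 'cV[R]_d) : R :=
  match lk with
  | CrossEntropy =>
      - ln (expR (dotv (col k W) m) / \sum_(j < K) expR (dotv (col j W) m))
  | DotRegression => 2^-1 * (dotv (col k W) m - 1) ^+ 2
  end.

(* Session t problem: features M k i for the classes k with sess k = t
   (values for classes of other sessions are irrelevant). *)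
Definition feat_type (R : realType) (d K : nat) (n : 'I_K -> nat) :=
  forall k : 'I_K, 'I_(n k) -> 'cV[R]_d.

Definition session_N (K T : nat) (sess : 'I_K -> 'I_T.+1) (n : 'I_K -> nat)
    (t : 'I_T.+1) : nat :=
  \sum_(k < K | sess k == t) n k.

Definition session_obj (R : realType) (d K T : nat) (lk : loss_kind)
    (W : 'M[R]_(d, K)) (sess : 'I_K -> 'I_T.+1) (n : 'I_K -> nat)
    (t : 'I_T.+1) (M : feat_type R d n) : R :=
  (session_N sess n t)%:R^-1 *
    \sum_(k < K | sess k == t) \sum_(i < n k) loss lk W k (M k i).

Definition session_feasible (R : realType) (d K T : nat)
    (sess : 'I_K -> 'I_T.+1) (n : 'I_K -> nat) (t : 'I_T.+1)
    (M : feat_type R d n) : Prop :=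
  forall k : 'I_K, sess k = t -> forall i : 'I_(n k), vnorm (M k i) ^+ 2 <= 1.

Definition session_global_min (R : realType) (d K T : nat) (lk : loss_kind)
    (W : 'M[R]_(d, K)) (sess : 'I_K -> 'I_T.+1) (n : 'I_K -> nat)
    (t : 'I_T.+1) (M : feat_type R d n) : Prop :=
  session_feasible sess t M /\
  forall M' : feat_type R d n, session_feasible sess t M' ->
    session_obj lk W sess t M <= session_obj lk W sess t M'.

From HB Require Import structures.
From mathcomp Require Import all_boot all_order all_algebra.
From mathcomp Require Import all_classical all_reals all_analysis.
From mathcomp Require Import ring lra.
Set Implicit Arguments. Unset Strict Implicit. Unset Printing Implicit Defensive.
Import Order.TTheory GRing.Theory Num.Theory.
Local Open Scope ring_scope.

(* The features of a session are independent variables, so a global minimiser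
   cannot improve by moving a single feature m of class k to the classifier
   column w_k, which is a unit vector: loss(m) <= loss(w_k).  For dot regression
   loss(w_k) = 0 forces w_k.m = 1.  For cross-entropy, the ETF columns sum to
   zero, hence so do the logits of m, and Jensen's inequality for exp shows that
   such logits cannot beat the ETF Gram row of w_k unless w_k.m >= 1.  Since
   |m| <= 1 = |w_k|, this is the equality case of Cauchy-Schwarz: m = w_k. *)

Section DotProduct.
Context {R : realType} {d : nat}.
Implicit Types u v m w : 'cV[R]_d.

Lemma dotvC u v : dotv u v = dotv v u.
Proof. by apply: eq_bigr => i _; rewrite mulrC. Qed.

Lemma dotv_ge0 u : 0 <= dotv u u.
Proof. by apply: sumr_ge0 => i _; rewrite -expr2 sqr_ge0. Qed.

Lemma dotv_col_mx {K : nat} (A : 'M[R]_(d, K)) j j' :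
  dotv (col j A) (col j' A) = (A^T *m A) j j'.
Proof. by rewrite /dotv !mxE; apply: eq_bigr => i _; rewrite !mxE. Qed.

Lemma sqr_vnorm u : vnorm u ^+ 2 = dotv u u.
Proof. by rewrite sqr_sqrtr ?dotv_ge0. Qed.

Lemma vnorm_dotv1 u : dotv u u = 1 -> vnorm u = 1.
Proof. by rewrite /vnorm => ->; rewrite sqrtr1. Qed.

Lemma dotv_sub_sqr m w :
  \sum_(i < d) (m i ord0 - w i ord0) ^+ 2 = dotv m m - 2 * dotv w m + dotv w w.
Proof. by rewrite /dotv mulr_sumr -sumrB -big_split; apply: eq_bigr => i _ /=; ring. Qed.

(* Equality case of Cauchy-Schwarz: |m - w|^2 = |m|^2 - 2 w.m + |w|^2 <= 0. *)
Lemma dotv_ge1_eq m w :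
  dotv m m <= 1 -> dotv w w = 1 -> 1 <= dotv w m -> m = w.
Proof.
move=> hm hw hwm.
have /psumr_eq0P sq0 : \sum_(i < d) (m i ord0 - w i ord0) ^+ 2 = 0.
  apply/eqP; rewrite eq_le sumr_ge0 ?andbT => [|i _]; last exact: sqr_ge0.
  rewrite dotv_sub_sqr; lra.
apply/matrixP => i j; rewrite (ord1 j).
by move/eqP: (sq0 (fun i _ => sqr_ge0 _) i isT); rewrite sqrf_eq0 subr_eq0 => /eqP.
Qed.

End DotProduct.

Section CrossEntropy.
Context {R : realType}.

(* Jensen's inequality for expR, from the tangent line at the mean. *)
Lemma sum_expR_ge_mean (I : finType) (P : pred I) (a : I -> R) :
  (0 < #|P|)%N ->
  #|P|%:R * expR ((\sum_(j | P j) a j) / #|P|%:R) <= \sum_(j | P j) expR (a j).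
Proof.
move=> P_gt0; set c : R := #|P|%:R; set mu := _ / c.
have c_neq0 : c != 0 by rewrite pnatr_eq0 -lt0n.
have -> : c * expR mu = \sum_(j | P j) expR mu * (1 + (a j - mu)).
  rewrite -mulr_sumr big_split /= sumrB !sumr_const -/c.
  by rewrite -mulr_natr -/c /mu divfK // subrr addr0 mulrC.
apply: ler_sum => j _.
by rewrite -{2}(subrK mu (a j)) expRD mulrC ler_pM2r ?expR_gt0 ?expR_ge1Dx.
Qed.

Variable K : nat.
Implicit Types (a : 'I_K -> R) (k : 'I_K).

Definition softmax_ce a k : R := - ln (expR (a k) / \sum_j expR (a j)).

Lemma eq_softmax_ce a b k : a =1 b -> softmax_ce a k = softmax_ce b k.
Proof. by move=> eq_ab; rewrite /softmax_ce eq_ab (eq_bigr _ (fun j _ => congr1 expR (eq_ab j))). Qed.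

Lemma softmax_ceE a k : softmax_ce a k = ln (1 + \sum_(j | j != k) expR (a j - a k)).
Proof.
have sum_gt0 : 0 < \sum_j expR (a j).
  by rewrite (bigD1 k) //= ltr_pwDl ?expR_gt0 // sumr_ge0 // => j _; exact: expR_ge0.
rewrite /softmax_ce -lnV ?posrE ?divr_gt0 ?expR_gt0 // invf_div.
congr ln; rewrite mulr_suml (bigD1 k) //= divff ?gt_eqF ?expR_gt0 //.
by congr (_ + _); apply: eq_bigr => j _; rewrite expRB.
Qed.

Definition etf_gram k j : R := K%:R / (K%:R - 1) * (k == j)%:R - (K%:R - 1)^-1.

Hypothesis K_gt1 : (1 < K)%N.

Lemma etf_gram_diag k : etf_gram k k = 1.
Proof.
have Km1_neq0 : K%:R - 1 != 0 :> R by rewrite subr_eq0 pnatr_eq1 gtn_eqF.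
by rewrite /etf_gram eqxx mulr1; field.
Qed.

(* Both sides are ln (1 + sum of exp-gaps); by Jensen the gap sum of [a] is at
   least (K-1) expR (- K a_k / (K-1)), that of the ETF row is (K-1) expR (- K / (K-1)). *)
Lemma softmax_ce_etf_gram_le a k :
  \sum_j a j = 0 -> softmax_ce a k <= softmax_ce (etf_gram k) k -> 1 <= a k.
Proof.
move=> a_sum0.
have K_gt0 : 0 < K%:R :> R by rewrite ltr0n ltnW.
have c_gt0 : 0 < K%:R - 1 :> R by rewrite subr_gt0 ltr1n.
have card_k : #|predC1 k| = K.-1 by rewrite cardC1 card_ord.
have cE : (K.-1)%:R = K%:R - 1 :> R by rewrite -{2}(prednK (ltnW K_gt1)) -addn1 natrD addrK.
set c := K%:R - 1 in c_gt0 cE *.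
have gap_etf : \sum_(j | j != k) expR (etf_gram k j - etf_gram k k) =
               c * expR (- (K%:R / c)).
  rewrite (eq_bigr (fun=> expR (- (K%:R / c)))) => [|j /negbTE jk].
    by rewrite sumr_const card_k -[_ *+ K.-1]mulr_natr cE mulrC.
  rewrite /etf_gram eqxx eq_sym jk mulr0 mulr1 /c; congr expR.
  by field; rewrite gt_eqF.
have gap_a : c * expR (- (K%:R * a k) / c) <= \sum_(j | j != k) expR (a j - a k).
  have sum_gap : \sum_(j | j != k) (a j - a k) = - (K%:R * a k).
    move: a_sum0; rewrite (bigD1 k) //= sumrB sumr_const card_k -[_ *+ K.-1]mulr_natr cE.
    by rewrite /c; lra.
  have := @sum_expR_ge_mean _ (predC1 k) (fun j => a j - a k).
  by rewrite card_k cE sum_gap; apply; rewrite -ltnS prednK // ltnW.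
have sum_gap_gt0 (b : 'I_K -> R) : 0 < 1 + \sum_(j | j != k) expR (b j - b k).
  by rewrite ltr_pwDl // sumr_ge0 // => j _; exact: expR_ge0.
rewrite !softmax_ceE ler_ln ?posrE // lerD2l gap_etf => gap_le.
have : expR (- (K%:R * a k) / c) <= expR (- (K%:R / c)).
  by rewrite -(ler_pM2l c_gt0); exact: le_trans gap_a gap_le.
by rewrite ler_expR mulNr lerN2 ler_pM2r ?invr_gt0 // -{1}[K%:R]mulr1 ler_pM2l.
Qed.

End CrossEntropy.

Section Centering.
Context {R : numFieldType} {K : nat}.
Hypothesis K_gt0 : (0 < K)%N.

Definition centering_mx : 'M[R]_K := 1%:M - K%:R^-1 *: const_mx 1.

Lemma mul_const1_mx (m p : nat) :
  (const_mx 1 : 'M[R]_(m, K)) *m (const_mx 1 : 'M[R]_(K, p)) = K%:R *: const_mx 1.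
Proof.
apply/matrixP => i j; rewrite !mxE.
under eq_bigr do rewrite !mxE mulr1.
by rewrite sumr_const card_ord mulr1.
Qed.

Let K_neq0 : K%:R != 0 :> R. Proof. by rewrite pnatr_eq0 -lt0n. Qed.

Lemma trmx_centering : centering_mx^T = centering_mx.
Proof. by rewrite /centering_mx linearB /= linearZ /= trmx1 trmx_const. Qed.

Lemma centering_mx_const1 (p : nat) :
  centering_mx *m (const_mx 1 : 'M[R]_(K, p)) = 0.
Proof. by rewrite mulmxBl mul1mx -scalemxAl mul_const1_mx scalerA mulVf ?scale1r ?subrr. Qed.

Lemma const1_centering_mx (p : nat) :
  (const_mx 1 : 'M[R]_(p, K)) *m centering_mx = 0.
Proof.
by rewrite -trmx_centering -(trmx_const K p (1 : R)) -trmx_mul centering_mx_const1 trmx0.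
Qed.

Lemma centering_mx_idem : centering_mx *m centering_mx = centering_mx.
Proof.
by rewrite {1}/centering_mx mulmxBl mul1mx -scalemxAl const1_centering_mx scaler0 subr0.
Qed.

End Centering.

Section SimplexETF.
Context {R : realType} {d K : nat}.
Variable U : 'M[R]_(d, K).
Hypothesis K_gt1 : (1 < K)%N.

Let W := simplex_ETF U.
Let K_gt0 : (0 < K)%N. Proof. exact: ltnW. Qed.

Lemma simplex_ETF_const1 : W *m (const_mx 1 : 'M[R]_(K, 1)) = 0.
Proof. by rewrite /W /simplex_ETF -scalemxAl -mulmxA centering_mx_const1 // mulmx0 scaler0. Qed.

Lemma sum_dotv_simplex_ETF (m : 'cV[R]_d) : \sum_(j < K) dotv (col j W) m = 0.
Proof.
rewrite /dotv exchange_big /=; apply: big1 => i _.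
have /matrixP/(_ i ord0) := simplex_ETF_const1; rewrite !mxE => rowW0.
rewrite -[RHS](mulr0 (m i ord0)) -[X in _ = _ * X]rowW0 mulr_sumr.
by apply: eq_bigr => j _; rewrite !mxE mulr1 mulrC.
Qed.

Hypothesis U_orth : U^T *m U = 1%:M.

Lemma simplex_ETF_gram : W^T *m W = (K%:R / (K%:R - 1)) *: centering_mx.
Proof.
have Km1_ge0 : 0 <= K%:R / (K%:R - 1) :> R by rewrite divr_ge0 // subr_ge0 ler1n ltnW.
rewrite /W /simplex_ETF [(_ *: _)^T]linearZ /= trmx_mul trmx_centering -scalemxAr -scalemxAl scalerA.
by rewrite -expr2 sqr_sqrtr // -mulmxA (mulmxA _ U) U_orth mul1mx centering_mx_idem.
Qed.

Lemma dotv_simplex_ETF (j j' : 'I_K) :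
  dotv (col j W) (col j' W) = etf_gram j j'.
Proof.
have K_neq0 : K%:R != 0 :> R by rewrite pnatr_eq0 -lt0n.
have Km1_neq0 : K%:R - 1 != 0 :> R by rewrite subr_eq0 pnatr_eq1 gtn_eqF.
rewrite dotv_col_mx simplex_ETF_gram !mxE /etf_gram; field.
by rewrite K_neq0 Km1_neq0.
Qed.
End SimplexETF.

Lemma loss_CrossEntropyE {R : realType} {d K : nat} (W : 'M[R]_(d, K)) k m :
  loss CrossEntropy W k m = softmax_ce (fun j => dotv (col j W) m) k.
Proof. by []. Qed.

Lemma loss_le_simplex_ETF_eq {R : realType} {d K : nat} (lk : loss_kind)
    (U : 'M[R]_(d, K)) (k : 'I_K) (m : 'cV[R]_d) :
  (1 < K)%N -> U^T *m U = 1%:M -> dotv m m <= 1 ->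
  loss lk (simplex_ETF U) k m <= loss lk (simplex_ETF U) k (col k (simplex_ETF U)) ->
  m = col k (simplex_ETF U).
Proof.
move=> K_gt1 U_orth m_le1 loss_le.
apply: dotv_ge1_eq; rewrite ?dotv_simplex_ETF ?etf_gram_diag //.
case: lk loss_le => loss_le.
- apply: (softmax_ce_etf_gram_le K_gt1 (sum_dotv_simplex_ETF U K_gt1 m)).
  rewrite !loss_CrossEntropyE [X in _ <= X](eq_softmax_ce (b := etf_gram k)) in loss_le => // j.
  by rewrite dotv_simplex_ETF // /etf_gram eq_sym.
- move: loss_le; rewrite /loss dotv_simplex_ETF // etf_gram_diag // subrr expr0n mulr0.
  by rewrite dotvC; nra.
Qed.

Section Sessions.
Context {R : realType} {d K T : nat} (lk : loss_kind) (W : 'M[R]_(d, K)).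
Context (sess : 'I_K -> 'I_T.+1) (n : 'I_K -> nat).

Definition feat_set (M : feat_type R d n) (k : 'I_K) (i : 'I_(n k)) (v : 'cV[R]_d) :
    feat_type R d n :=
  fun k' i' => if (k' == k) && (val i' == val i) then v else M k' i'.

Lemma session_obj_feat_set (M : feat_type R d n) k (i : 'I_(n k)) v :
  session_obj lk W sess (sess k) (feat_set M i v) =
  session_obj lk W sess (sess k) M +
    (session_N sess n (sess k))%:R^-1 * (loss lk W k v - loss lk W k (M k i)).
Proof.
rewrite /session_obj -mulrDr; congr (_ * _).
rewrite (bigD1 k) //= [in RHS](bigD1 k) //=.
rewrite (eq_bigr (fun k' => \sum_(i' < n k') loss lk W k' (M k' i'))) => [|k' /andP[_]].
  rewrite (bigD1 i) //= [in RHS](bigD1 i) //= {1}/feat_set !eqxx.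
  rewrite (eq_bigr (fun i' => loss lk W k (M k i'))) => [|i' i'_neq]; first by lra.
  by rewrite /feat_set eqxx (inj_eq val_inj) (negbTE i'_neq).
by move=> /negbTE k'_neq; apply: eq_bigr => i' _; rewrite /feat_set k'_neq.
Qed.

Lemma session_global_min_loss_le (M : feat_type R d n) k (i : 'I_(n k)) v :
  session_global_min lk W sess (sess k) M -> vnorm v ^+ 2 <= 1 ->
  loss lk W k (M k i) <= loss lk W k v.
Proof.
case=> M_feas M_min v_le1.
have set_feas : session_feasible sess (sess k) (feat_set M i v).
  by move=> k' k'_sess i'; rewrite /feat_set; case: ifP => _ //; exact: M_feas.
have N_gt0 : (0 < session_N sess n (sess k))%N.
  by rewrite /session_N (bigD1 k) //= addn_gt0 (leq_ltn_trans (leq0n i) (ltn_ord i)).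
have := M_min _ set_feas; rewrite session_obj_feat_set lerDl.
by rewrite pmulr_rge0 ?subr_ge0 // invr_gt0 ltr0n.
Qed.
End Sessions.

Theorem theorem1 (R : realType) (d K T : nat) (hK : (2 <= K)%N) (hdK : (K <= d)%N)
    (U : 'M[R]_(d, K)) (hU : U^T *m U = 1%:M)
    (sess : 'I_K -> 'I_T.+1)
    (hsess : forall t : 'I_T.+1, exists k : 'I_K, sess k = t)
    (n : 'I_K -> nat) (hn : forall k, (0 < n k)%N)
    (lk : loss_kind)
    (Mhat : forall t : 'I_T.+1, feat_type R d n)
    (hMhat : forall t : 'I_T.+1,
        session_global_min lk (simplex_ETF U) sess t (Mhat t)) :
  forall (k : 'I_K) (i : 'I_(n k)),
    let m := Mhat (sess k) k i in
    vnorm m = 1 /\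
    forall k' : 'I_K,
      dotv m (col k' (simplex_ETF U)) =
        K%:R / (K%:R - 1) * (k == k')%:R - (K%:R - 1)^-1.
Proof.
move=> k i m.
have w_unit : dotv (col k (simplex_ETF U)) (col k (simplex_ETF U)) = 1.
  by rewrite dotv_simplex_ETF // etf_gram_diag.
have m_eq : m = col k (simplex_ETF U).
  have [m_feas _] := hMhat (sess k).
  apply: (loss_le_simplex_ETF_eq hK hU); first by rewrite -sqr_vnorm m_feas.
  by apply: session_global_min_loss_le (hMhat _) _; rewrite sqr_vnorm w_unit.
split=> [|k']; rewrite m_eq; first exact: vnorm_dotv1.
exact: dotv_simplex_ETF.
Qed.
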